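(* Let $g_1(s),\dots,g_n(s)$ and $f(s)$ be rational transfer functions such that there is $\gamma>0$ with $\mathrm{Re}(g_i(s))\ge\frac1\gamma|g_i(s)|^2$ for all $\mathrm{Re}(s)>0$ and all $i$, and $f$ is positive real ($\mathrm{Re}(f(s))>0$ for $\mathrm{Re}(s)>0$, $\mathrm{Im}(f(s))=0$ for $\mathrm{Re}(s)=0$). Then for any $V_k\in\mathbb{R}^{n\times k}$ with $V_k^TV_k=I$ and any symmetric $\Lambda_k\succeq0$, the transfer matrix $$T(s)=V_k\big(V_k^T\mathrm{diag}\{g_i^{-1}(s)\}V_k+f(s)\Lambda_k\big)^{-1}V_k^T$$ satisfies $\|T(s)\|_{\mathcal{H}_\infty}\le\gamma$.
   Context: $\|T\|_{\mathcal{H}_\infty}=\sup_{\mathrm{Re}(s)>0}\|T(s)\|$, with $\|\cdot\|$ the spectral norm. *)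

From HB Require Import structures.
From mathcomp Require Import all_boot all_order all_algebra.
From mathcomp Require Export complex.
Set Implicit Arguments. Unset Strict Implicit. Unset Printing Implicit Defensive.
Import Order.TTheory GRing.Theory Num.Theory.
Local Open Scope ring_scope.
Local Open Scope complex_scope.

Definition rat_eval (R : rcfType) (p q : {poly R}) (s : R[i]) : R[i] :=
  (map_poly (real_complex R) p).[s] / (map_poly (real_complex R) q).[s].

Definition cabs (R : rcfType) (z : R[i]) : R := Num.sqrt (complex.Re z ^+ 2 + complex.Im z ^+ 2).

Definition vnorm (R : rcfType) (m : nat) (x : 'cV[R[i]]_m) : R :=
  Num.sqrt (\sum_(i < m) cabs (x i 0) ^+ 2).

Definition spec_norm_le (R : rcfType) (m p : nat) (M : 'M[R[i]]_(m, p)) (c : R) : Prop :=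
  forall x : 'cV[R[i]]_p, vnorm (M *m x) <= c * vnorm x.

Definition psd (R : rcfType) (k : nat) (L : 'M[R]_k) : Prop :=
  L^T = L /\ forall x : 'cV[R]_k, 0 <= (x^T *m L *m x) 0 0.

Definition Tmat (R : rcfType) (n k : nat)
  (pg qg : 'I_n -> {poly R}) (pf qf : {poly R})
  (V : 'M[R]_(n, k)) (Lam : 'M[R]_k) (s : R[i]) : 'M[R[i]]_n :=
  let Vc := map_mx (real_complex R) V in
  let D := diag_mx (\row_i (rat_eval (pg i) (qg i) s)^-1) in
  Vc *m invmx (Vc^T *m D *m Vc + rat_eval pf qf s *: map_mx (real_complex R) Lam) *m Vc^T.

(* ||T||_{H_infinity} <= c, i.e. sup_{Re s > 0} ||T(s)|| <= c, where the sup is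
   over the points where T(s) is given by the formula (all g_i(s) <> 0). *)
Definition hinf_le (R : rcfType) (n : nat) (defined : R[i] -> Prop)
  (T : R[i] -> 'M[R[i]]_n) (c : R) : Prop :=
  forall s : R[i], 0 < complex.Re s -> defined s -> spec_norm_le (T s) c.

From HB Require Import structures.
From mathcomp Require Import all_boot all_order all_algebra.
From mathcomp Require Import complex.
From mathcomp Require Import ring lra.
Set Implicit Arguments. Unset Strict Implicit. Unset Printing Implicit Defensive.
Import Order.TTheory GRing.Theory Num.Theory.
Local Open Scope ring_scope.
Local Open Scope complex_scope.

(* The matrix M(s) = V^T diag{1/g_i(s)} V + f(s) Lam is coercive with constant
   1/gamma on the right half-plane: Re(1/g_i) >= 1/gamma is a rewriting of the
   hypothesis on g_i, V is an isometry, and Re(f z^* Lam z) >= 0 because the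
   Hermitian form of a real positive semidefinite matrix is nonnegative.  A
   matrix with Re(z^* M z) >= c |z|^2 satisfies c |z| <= |M z|, so it is
   invertible and |M^-1| <= 1/c; finally V and V^T do not increase norms. *)

Section ComplexMatrices.
Variable R : rcfType.
Local Notation C := R[i].
Local Notation rc := (real_complex R).

Definition cnorm2 (c : C) : R := complex.Re c ^+ 2 + complex.Im c ^+ 2.

Definition vnorm2 m (x : 'cV[C]_m) : R := \sum_i cnorm2 (x i 0).

Definition ctrmx m p (A : 'M[C]_(m, p)) : 'M[C]_(p, m) := (map_mx conjc A)^T.

Definition cdot m (x y : 'cV[C]_m) : C := (ctrmx x *m y) 0 0.

Lemma cnorm2_ge0 c : 0 <= cnorm2 c.
Proof. by rewrite addr_ge0 ?sqr_ge0. Qed.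

Lemma cnorm2_eq0 c : (cnorm2 c == 0) = (c == 0).
Proof. by rewrite paddr_eq0 ?sqr_ge0 // !sqrf_eq0 eq_complex. Qed.

Lemma cabs_sqr c : cabs c ^+ 2 = cnorm2 c.
Proof. by rewrite sqr_sqrtr ?cnorm2_ge0. Qed.

Lemma ReV c : complex.Re c^-1 = complex.Re c / cnorm2 c.
Proof. by case: c. Qed.

Lemma Re_inv_ge (a : R) c : c != 0 ->
  a * cnorm2 c <= complex.Re c -> a <= complex.Re c^-1.
Proof.
move=> c_neq0; have c_gt0 : 0 < cnorm2 c by rewrite lt0r cnorm2_eq0 c_neq0 cnorm2_ge0.
by rewrite ReV ler_pdivlMr.
Qed.

Lemma Re_mul_ge0 (f w : C) : 0 <= complex.Re f -> 0 <= w -> 0 <= complex.Re (f * w).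
Proof.
case: f w => a b [u v] /= a_ge0; rewrite lecE /= => /andP[/eqP -> u_ge0].
by rewrite mulr0 subr0 mulr_ge0.
Qed.

Lemma vnorm2_ge0 m (x : 'cV[C]_m) : 0 <= vnorm2 x.
Proof. by apply: sumr_ge0 => i _; apply: cnorm2_ge0. Qed.

Lemma vnorm2_eq0 m (x : 'cV[C]_m) : vnorm2 x = 0 -> x = 0.
Proof.
move/eqP; rewrite psumr_eq0 => [/allP x0|i _]; last exact: cnorm2_ge0.
apply/matrixP => i j; rewrite ord1 mxE; apply/eqP.
by rewrite -cnorm2_eq0; apply: implyP (x0 i (mem_index_enum i)) isT.
Qed.

Lemma vnormE m (x : 'cV[C]_m) : vnorm x = Num.sqrt (vnorm2 x).
Proof. by congr Num.sqrt; apply: eq_bigr => i _; rewrite cabs_sqr. Qed.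

Lemma cdotE m (x y : 'cV[C]_m) : cdot x y = \sum_i (x i 0)^* * y i 0.
Proof. by rewrite /cdot !mxE; apply: eq_bigr => i _; rewrite !mxE. Qed.

Lemma vnorm2E m (x : 'cV[C]_m) : vnorm2 x = complex.Re (cdot x x).
Proof.
rewrite cdotE raddf_sum; apply: eq_bigr => i _.
by case: (x i 0) => u v; rewrite /cnorm2 /=; ring.
Qed.

Lemma vnorm2_scaleB m (a : R) (z y : 'cV[C]_m) :
  vnorm2 (a%:C *: z - y) =
  a ^+ 2 * vnorm2 z - 2%:R * a * complex.Re (cdot z y) + vnorm2 y.
Proof.
rewrite cdotE raddf_sum !mulr_sumr -sumrN -!big_split; apply: eq_bigr => i _.
by rewrite !mxE; case: (z i 0) (y i 0) => [u v] [p q]; rewrite /cnorm2 /=; ring.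
Qed.

Lemma ctrmxM m p q (A : 'M[C]_(m, p)) (B : 'M[C]_(p, q)) :
  ctrmx (A *m B) = ctrmx B *m ctrmx A.
Proof. by rewrite /ctrmx map_mxM trmx_mul. Qed.

Lemma ctrmx_real m p (A : 'M[R]_(m, p)) : ctrmx (map_mx rc A) = (map_mx rc A)^T.
Proof. by congr trmx; apply/matrixP => i j; rewrite !mxE conjc_real. Qed.

Lemma cdot_mulmxl m p (A : 'M[C]_(m, p)) x y : cdot (A *m x) y = cdot x (ctrmx A *m y).
Proof. by rewrite /cdot ctrmxM mulmxA. Qed.

Lemma cdotZr m (x y : 'cV[C]_m) a : cdot x (a *: y) = a * cdot x y.
Proof. by rewrite /cdot -scalemxAr mxE. Qed.

Lemma psd_cdot_ge0 m (L : 'M[R]_m) (z : 'cV[C]_m) :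
  psd L -> 0 <= cdot z (map_mx rc L *m z).
Proof.
move=> [LT L_ge0]; set a := map_mx (@complex.Re R) z; set b := map_mx (@complex.Im R) z.
have zE : z = map_mx rc a + 'i *: map_mx rc b.
  apply/matrixP => i j; rewrite !mxE; case: (z i j) => u v.
  by apply/eqP; rewrite eq_complex /=; apply/andP; split; apply/eqP; ring.
have ctrE : ctrmx z = (map_mx rc a)^T - 'i *: (map_mx rc b)^T.
  apply/matrixP => i j; rewrite zE !mxE; move: (a j i) (b j i) => u v.
  by apply/eqP; rewrite eq_complex /=; apply/andP; split; apply/eqP; ring.
have formE x y : (map_mx rc x)^T *m map_mx rc L *m map_mx rc y = map_mx rc (x^T *m L *m y).
  by rewrite !map_mxM map_trmx.
(* Cross terms of z = a + i b cancel because L is symmetric. *)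
have formC : b^T *m L *m a = a^T *m L *m b.
  by rewrite [LHS]mx11_scalar -tr_scalar_mx -mx11_scalar !trmx_mul trmxK LT mulmxA.
have := L_ge0 a; have := L_ge0 b.
rewrite /cdot ctrE zE mulmxBl !mulmxDr -!scalemxAl -!scalemxAr !mulmxA !formE formC.
move: (a^T *m L *m a) (b^T *m L *m b) (a^T *m L *m b) => P S Q S_ge0 P_ge0.
by rewrite !mxE lecE /=; apply/andP; split; [apply/eqP; ring | lra].
Qed.

Definition coercive m (c : R) (M : 'M[C]_m) : Prop :=
  forall z, c * vnorm2 z <= complex.Re (cdot z (M *m z)).

Lemma coerciveD m c (M N : 'M[C]_m) : coercive c M ->
  (forall z, 0 <= complex.Re (cdot z (N *m z))) -> coercive c (M + N).
Proof.
move=> cM N_ge0 z; rewrite mulmxDl /cdot mulmxDr mxE raddfD /=.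
by rewrite -[leLHS]addr0 lerD ?cM ?N_ge0.
Qed.

Lemma coercive_diag m c (d : 'rV[C]_m) :
  (forall i, c <= complex.Re (d 0 i)) -> coercive c (diag_mx d).
Proof.
move=> d_ge z; rewrite /vnorm2 cdotE raddf_sum /= mulr_sumr; apply: ler_sum => i _.
have -> : complex.Re ((z i 0)^* * (diag_mx d *m z) i 0) = complex.Re (d 0 i) * cnorm2 (z i 0).
  rewrite mul_diag_mx mxE; case: (z i 0) (d 0 i) => [u v] [p q] /=.
  by rewrite /cnorm2 /=; ring.
by rewrite ler_wpM2r ?cnorm2_ge0 ?d_ge.
Qed.

Lemma coercive_mulmx_ge m c (M : 'M[C]_m) z : 0 < c -> coercive c M ->
  c ^+ 2 * vnorm2 z <= vnorm2 (M *m z).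
Proof.
move=> c_gt0 cM; have := ler_wpM2l (ltW c_gt0) (cM z).
(* 0 <= |c z - M z|^2 = c^2 |z|^2 - 2 c Re <z, M z> + |M z|^2 *)
by have := vnorm2_ge0 (c%:C *: z - M *m z); rewrite vnorm2_scaleB; nra.
Qed.

Lemma coercive_unitmx m c (M : 'M[C]_m) : 0 < c -> coercive c M -> M \in unitmx.
Proof.
move=> c_gt0 cM; rewrite -unitmx_tr unitmxE unitfE; apply/negP => /det0P[v v_neq0 vM].
have Mv : M *m v^T = 0 by rewrite -[M]trmxK -trmx_mul vM trmx0.
have vT0 : vnorm2 v^T = 0.
  apply/le_anti; rewrite vnorm2_ge0 andbT -(pmulr_rle0 _ c_gt0).
  by have := cM v^T; rewrite Mv /cdot mulmx0 mxE.
by rewrite -[v]trmxK (vnorm2_eq0 vT0) trmx0 eqxx in v_neq0.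
Qed.

Section Isometry.
Variables (n k : nat) (V : 'M[R]_(n, k)).
Hypothesis VTV : V^T *m V = 1%:M.
Local Notation Vc := (map_mx rc V).

Lemma map_VTV : Vc^T *m Vc = 1%:M.
Proof. by rewrite map_trmx -map_mxM VTV map_mx1. Qed.

Lemma vnorm2_isometry z : vnorm2 (Vc *m z) = vnorm2 z.
Proof. by rewrite !vnorm2E cdot_mulmxl ctrmx_real mulmxA map_VTV mul1mx. Qed.

Lemma vnorm2_coisometry_le x : vnorm2 (Vc^T *m x) <= vnorm2 x.
Proof.
set y := Vc^T *m x; have := vnorm2_ge0 (1%:C *: (Vc *m y) - x).
rewrite vnorm2_scaleB vnorm2_isometry cdot_mulmxl ctrmx_real -/y -vnorm2E expr1n.
by have := vnorm2_ge0 y; lra.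
Qed.

Lemma coercive_compress c (M : 'M[C]_n) : coercive c M -> coercive c (Vc^T *m M *m Vc).
Proof.
by move=> cM z; rewrite -vnorm2_isometry -!mulmxA -ctrmx_real -cdot_mulmxl; apply: cM.
Qed.

Lemma vnorm2_compress_invmx c (M : 'M[C]_k) x : 0 < c -> coercive c M ->
  c ^+ 2 * vnorm2 (Vc *m invmx M *m Vc^T *m x) <= vnorm2 x.
Proof.
move=> c_gt0 cM; rewrite -!mulmxA vnorm2_isometry.
apply: le_trans (vnorm2_coisometry_le x).
by rewrite -{2}(mulKVmx (coercive_unitmx c_gt0 cM) (Vc^T *m x)) coercive_mulmx_ge.
Qed.

End Isometry.

Lemma spec_norm_le_inv m p (A : 'M[C]_(m, p)) c : 0 < c ->
  (forall x, c ^+ 2 * vnorm2 (A *m x) <= vnorm2 x) -> spec_norm_le A c^-1.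
Proof.
move=> c_gt0 A_le x; rewrite ler_pdivlMl // !vnormE.
have -> : c = Num.sqrt (c ^+ 2) by rewrite sqrtr_sqr gtr0_norm.
by rewrite -sqrtrM ?sqr_ge0 // ler_sqrt ?vnorm2_ge0.
Qed.

End ComplexMatrices.

Theorem lemma5 (R : rcfType) (n k : nat)
  (pg qg : 'I_n -> {poly R}) (pf qf : {poly R}) (gamma : R)
  (V : 'M[R]_(n, k)) (Lam : 'M[R]_k) :
  (* g_i = pg i / qg i and f = pf / qf are real rational functions *)
  (forall i, qg i != 0) -> qf != 0 ->
  (* the g_i are defined on the open right half-plane *)
  (forall i (s : R[i]), 0 < complex.Re s -> (map_poly (real_complex R) (qg i)).[s] != 0) ->
  0 < gamma ->
  (forall i (s : R[i]), 0 < complex.Re s ->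
     complex.Re (rat_eval (pg i) (qg i) s) >= gamma^-1 * cabs (rat_eval (pg i) (qg i) s) ^+ 2) ->
  (* f positive real *)
  (forall s : R[i], 0 < complex.Re s -> complex.Re (rat_eval pf qf s) > 0) ->
  (forall s : R[i], complex.Re s = 0 -> complex.Im (rat_eval pf qf s) = 0) ->
  V^T *m V = 1%:M ->
  psd Lam ->
  hinf_le (fun s => forall i, rat_eval (pg i) (qg i) s != 0)
          (Tmat pg qg pf qf V Lam) gamma.
Proof.
move=> _ _ _ gamma_gt0 g_bound f_pos _ VTV Lam_psd s s_pos g_neq0.
have igamma_gt0 : 0 < gamma^-1 by rewrite invr_gt0.
rewrite /Tmat -[gamma]invrK; apply: spec_norm_le_inv => // x.
apply: vnorm2_compress_invmx => //; apply: coerciveD => [|z].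
- apply: coercive_compress => //; apply: coercive_diag => i; rewrite mxE.
  by apply: Re_inv_ge; rewrite ?g_neq0 // -cabs_sqr g_bound.
- rewrite -scalemxAl cdotZr.
  exact: Re_mul_ge0 (ltW (f_pos s s_pos)) (psd_cdot_ge0 _ Lam_psd).
Qed.
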